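(* Let $n\ge1$, $\tau\in S_n$, $\Sigma_0=(1\,2)(3\,4)\cdots(2n-1\,\,2n)\in S_{2n}$, $\Sigma_1'=\prod_{i=1}^n(2i-1,\ 2\tau(i))$ and $\Sigma_{\rm tot}=\Sigma_0\Sigma_1'$, which preserves the set $V_n^-=\{1,3,\dots,2n-1\}$ and the set $V_n^+=\{2,4,\dots,2n\}$. Then the restriction of $\Sigma_{\rm tot}$ to $V_n^-$ has exactly $C(\tau)$ cycles, and the restriction of $\Sigma_{\rm tot}$ to $V_n^+$ also has exactly $C(\tau)$ cycles. Consequently $C(\Sigma_0\Sigma_1')=2C(\tau)$.
   Context: For a permutation $\pi$, $C(\pi)$ denotes the number of cycles of $\pi$ in its disjoint cycle decomposition, fixed points counted as cycles of length one. $S_m$ is the symmetric group on $\{1,\dots,m\}$. *)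

From mathcomp Require Import all_boot all_order all_fingroup.
Set Implicit Arguments. Unset Strict Implicit. Unset Printing Implicit Defensive.

(* Points {1,...,2n} are represented 0-indexed by 'I_(n.*2):
   the paper's point 2i-1 (i = 1..n) is  ev i  (value 2(i-1)),
   the paper's point 2i           is  od i  (value 2(i-1)+1),
   for i : 'I_n (0-indexed). *)

Lemma ev_lt n (i : 'I_n) : i.*2 < n.*2.
Proof. by rewrite ltn_double. Qed.

Lemma od_lt n (i : 'I_n) : (i.*2).+1 < n.*2.
Proof. by rewrite ltn_Sdouble. Qed.

Definition ev n (i : 'I_n) : 'I_(n.*2) := Ordinal (ev_lt i).
Definition od n (i : 'I_n) : 'I_(n.*2) := Ordinal (od_lt i).

Definition Vminus n : {set 'I_(n.*2)} := [set ev i | i : 'I_n].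
Definition Vplus n : {set 'I_(n.*2)} := [set od i | i : 'I_n].

Definition Sigma0 n : {perm 'I_(n.*2)} :=
  (\prod_(i < n) tperm (ev i) (od i))%g.

Definition Sigma1' n (tau : {perm 'I_n}) : {perm 'I_(n.*2)} :=
  (\prod_(i < n) tperm (ev i) (od (tau i)))%g.

(* Sigma_tot = Sigma_0 Sigma_1' as composition of maps (apply Sigma_1' first,
   then Sigma_0).  In MathComp, (s * t) x = t (s x), hence the order. *)
Definition Sigma_tot n (tau : {perm 'I_n}) : {perm 'I_(n.*2)} :=
  (Sigma1' tau * Sigma0 n)%g.

(* C(pi): number of cycles (fixed points included) *)
Definition ncycles (T : finType) (s : {perm T}) : nat := #|porbits s|.

(* number of cycles of the restriction of s to an s-invariant set V:
   the number of distinct cycles of s through points of V *)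
Definition ncycles_on (T : finType) (s : {perm T}) (V : {set T}) : nat :=
  #|[set porbit s x | x in V]|.

From mathcomp Require Import all_boot all_order all_fingroup.
Set Implicit Arguments. Unset Strict Implicit. Unset Printing Implicit Defensive.

(* Sigma_0 and Sigma_1' are products of disjoint transpositions, so Sigma_tot
   sends the point 2i-1 to 2tau(i)-1 and the point 2i to 2tau^-1(i).  Hence the
   odd points and the even points are invariant, and the cycles of Sigma_tot
   through them are the images of the cycles of tau and of tau^-1 respectively;
   tau and tau^-1 have the same cycles. *)

Section ProdDisjointTperm.

Variables (T : finType) (I : eqType) (f g : I -> T).
Hypotheses (f_inj : injective f) (g_inj : injective g) (fg : forall i j, f i != g j).

Local Notation tprod s := (\prod_(j <- s) tperm (f j) (g j))%g.

Lemma big_tperm_id (s : seq I) x :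
  (forall i, i \in s -> x != f i /\ x != g i) -> tprod s x = x.
Proof.
elim: s => [|a s IHs] Hx; first by rewrite big_nil perm1.
rewrite big_cons permM; have [xfa xga] := Hx a (mem_head _ _).
rewrite tpermD 1?eq_sym //; apply: IHs => i si.
by apply: Hx; rewrite inE si orbT.
Qed.

Lemma big_tpermL (s : seq I) i : uniq s -> i \in s -> tprod s (f i) = g i.
Proof.
elim: s => [|a s IHs] //= /andP[as_ Us]; rewrite inE big_cons permM.
case: (eqVneq i a) => [-> _ | ia /= si].
  rewrite tpermL big_tperm_id // => j sj; split; first by rewrite eq_sym fg.
  by apply: contraNneq as_ => /g_inj ->.
by rewrite tpermD ?IHs // ?(inj_eq f_inj) 1?eq_sym ?fg.
Qed.

Lemma big_tpermR (s : seq I) i : uniq s -> i \in s -> tprod s (g i) = f i.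
Proof.
elim: s => [|a s IHs] //= /andP[as_ Us]; rewrite inE big_cons permM.
case: (eqVneq i a) => [-> _ | ia /= si].
  rewrite tpermR big_tperm_id // => j sj; split; last exact: fg.
  by apply: contraNneq as_ => /f_inj ->.
by rewrite tpermD ?IHs // ?(inj_eq g_inj) 1?eq_sym ?fg.
Qed.

End ProdDisjointTperm.

Section Intertwining.

Variables (T U : finType) (S : {perm T}) (t : {perm U}) (h : U -> T).
Hypothesis S_h : forall x, S (h x) = h (t x).

Lemma porbit_intertwine x : porbit S (h x) = h @: porbit t x.
Proof.
have S_hX k y : (S ^+ k)%g (h y) = h ((t ^+ k)%g y).
  by rewrite !permX; elim: k y => [|k IHk] y //=; rewrite IHk S_h.
apply/setP => y; apply/porbitP/imsetP => [[k ->] | [z /porbitP[k ->] ->]].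
  by exists ((t ^+ k)%g x); [apply: mem_porbit | rewrite S_hX].
by exists k; rewrite S_hX.
Qed.

Lemma imset_intertwine : [set S x | x in [set h x | x : U]] = [set h x | x : U].
Proof.
rewrite -imset_comp; apply/setP => y; apply/imsetP/imsetP => -[x _ ->].
  by exists (t x); rewrite //= S_h.
by exists ((t^-1)%g x); rewrite //= S_h permKV.
Qed.

Lemma ncycles_on_intertwine : injective h -> ncycles_on S ([set h x | x : U]) = ncycles t.
Proof.
move=> h_inj; rewrite /ncycles -(card_imset _ (imset_inj h_inj)) /porbits.
rewrite /ncycles_on -!imset_comp; apply: eq_card => X.
by apply/imsetP/imsetP => -[x _ ->]; exists x; rewrite //= porbit_intertwine.
Qed.

End Intertwining.

Lemma porbit_sub_stable (T : finType) (S : {perm T}) (A : {set T}) x :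
  [set S y | y in A] = A -> x \in A -> porbit S x \subset A.
Proof.
move=> SA Ax; apply/subsetP => _ /porbitP[k ->]; rewrite permX.
elim: k => [|k IHk] //=; by rewrite -[in X in _ \in X]SA imset_f.
Qed.

Lemma ncycles_split (T : finType) (S : {perm T}) (A B : {set T}) :
  A :|: B = setT -> [disjoint A & B] -> [set S x | x in A] = A ->
  ncycles S = ncycles_on S A + ncycles_on S B.
Proof.
move=> AB dAB SA; rewrite /ncycles.
have -> : porbits S = [set porbit S x | x in A :|: B].
  by rewrite AB; apply/setP => X; apply/imsetP/imsetP => -[x _ ->]; exists x.
rewrite imsetU cardsU.
suff -> : [set porbit S x | x in A] :&: [set porbit S x | x in B] = set0.
  by rewrite cards0 subn0.
apply/setP => X; rewrite !inE; apply/negP => /andP[/imsetP[a Aa ->]].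
case/imsetP=> b Bb Eab; have := porbit_sub_stable SA Aa.
rewrite Eab => /subsetP/(_ b (porbit_id S b)) Ab.
by move: dAB => /disjointFr/(_ Ab); rewrite Bb.
Qed.

Lemma ev_inj n : injective (@ev n).
Proof. by move=> i j /(congr1 val) /= /(can_inj doubleK) /val_inj. Qed.

Lemma od_inj n : injective (@od n).
Proof. by move=> i j /(congr1 val) /= [] /(can_inj doubleK) /val_inj. Qed.

Lemma ev_neq_od n (i j : 'I_n) : ev i != od j.
Proof. by apply/eqP => /(congr1 (odd \o val)); rewrite /= !odd_double. Qed.

Lemma Vminus_Vplus_cover n : Vminus n :|: Vplus n = setT.
Proof.
apply/setP => x; rewrite !inE; apply/orP.
have x2_lt : x./2 < n by rewrite ltn_half_double.
have x_eq := odd_double_half x.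
case: (boolP (odd x)) => ox; [right | left]; apply/imsetP;
  exists (Ordinal x2_lt) => //; apply: val_inj => /=; rewrite -[in LHS]x_eq.
- by rewrite ox add1n.
- by rewrite (negbTE ox) add0n.
Qed.

Lemma Vminus_Vplus_disjoint n : [disjoint Vminus n & Vplus n].
Proof.
apply/pred0P => x /=; apply/andP => -[/imsetP[i _ ->] /imsetP[j _ /eqP]].
by rewrite (negbTE (ev_neq_od i j)).
Qed.

Lemma Sigma_tot_ev n (tau : {perm 'I_n}) i : Sigma_tot tau (ev i) = ev (tau i).
Proof.
have odtau_inj : injective (fun j => od (tau j)) by move=> a b /od_inj/perm_inj.
rewrite permM (big_tpermL (@ev_inj n) odtau_inj) ?index_enum_uniq ?mem_index_enum //;
  last by move=> *; apply: ev_neq_od.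
by rewrite (big_tpermR (@ev_inj n) (@od_inj n)) ?index_enum_uniq ?mem_index_enum //;
  move=> *; apply: ev_neq_od.
Qed.

Lemma Sigma_tot_od n (tau : {perm 'I_n}) i :
  Sigma_tot tau (od i) = od ((tau^-1)%g i).
Proof.
have odtau_inj : injective (fun j => od (tau j)) by move=> a b /od_inj/perm_inj.
rewrite -{1}(permKV tau i) permM.
rewrite (big_tpermR (@ev_inj n) odtau_inj) ?index_enum_uniq ?mem_index_enum //;
  last by move=> *; apply: ev_neq_od.
by rewrite (big_tpermL (@ev_inj n) (@od_inj n)) ?index_enum_uniq ?mem_index_enum //;
  move=> *; apply: ev_neq_od.
Qed.

Theorem lemma2 (n : nat) (hn : 0 < n) (tau : {perm 'I_n}) :
  [/\ [set Sigma_tot tau x | x in Vminus n] = Vminus n,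
      [set Sigma_tot tau x | x in Vplus n] = Vplus n,
      ncycles_on (Sigma_tot tau) (Vminus n) = ncycles tau,
      ncycles_on (Sigma_tot tau) (Vplus n) = ncycles tau
    & ncycles (Sigma_tot tau) = 2 * ncycles tau].
Proof.
have stable_minus := imset_intertwine (Sigma_tot_ev tau).
have stable_plus := imset_intertwine (Sigma_tot_od tau).
have cycles_minus : ncycles_on (Sigma_tot tau) (Vminus n) = ncycles tau.
  exact: ncycles_on_intertwine (Sigma_tot_ev tau) (@ev_inj n).
have cycles_plus : ncycles_on (Sigma_tot tau) (Vplus n) = ncycles tau.
  by rewrite [LHS](ncycles_on_intertwine (Sigma_tot_od tau) (@od_inj n)) /ncycles porbitsV.
split=> //.
rewrite (ncycles_split (Vminus_Vplus_cover n) (Vminus_Vplus_disjoint n) stable_minus).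
by rewrite cycles_minus cycles_plus mul2n addnn.
Qed.
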